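(* Let $n\ge 2$ and $\alpha=\pi/4$. For all $u,v\in\mathrm{Sym}(n)$, if $u<_B v$ then $\mathrm{B}^{\pi/4}_n(u)\prec \mathrm{B}^{\pi/4}_n(v)$.
   Context: $\mathrm{Sym}(n)$ is the group of permutations of $\{1,\dots,n\}$, written on the right: $(i)w$ is the image of $i$ under $w$, and $uv$ means ''first $u$, then $v$''. It is a Coxeter group with generators $s_i=(i,i+1)$, length function $\ell$, and set of reflections $T$ = all transpositions. The Bruhat order $<_B$ is the transitive closure of the relation $w<_B wt$ for $t\in T$ with $\ell(wt)=\ell(w)+1$. Borders: fix $n\ge2$ and $\alpha\in(0,\pi/2)$. For $k=1,\dots,n$ let $\theta_k=\frac{(k-1)(\pi-2\alpha)}{n-1}+\alpha$ and $\beta^k_n=(-\cos\theta_k,\ \sin\theta_k)\in\mathbb{R}^2$. For $w\in\mathrm{Sym}(n)$ and $i=0,\dots,n$ put $p_i(w)=\sum_{j=1}^{i}\beta_n^{(j)w^{-1}}$ (so $p_0(w)=0$). The border $\mathrm{B}^\alpha_n(w)$ is the polygonal path $\bigcup_{i=1}^n[p_{i-1}(w),p_i(w)]$ (its $i$-th edge being the segment $[p_{i-1}(w),p_i(w)]$). Since every $\beta^k_n$ has positive $y$-coordinate, the $y$-coordinate is strictly increasing along the path from $0$ to $h^\alpha_n=\sum_{k=1}^n\sin\theta_k$, so for each $y\in[0,h^\alpha_n]$ there is a unique point of $\mathrm{B}^\alpha_n(w)$ with $y$-coordinate $y$; denote its $x$-coordinate by $\mathrm{H}(\mathrm{B}^\alpha_n(w),y)$.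 For $u,v\in\mathrm{Sym}(n)$ we write $\mathrm{B}^\alpha_n(u)\prec\mathrm{B}^\alpha_n(v)$ (''precedes'') if $\mathrm{H}(\mathrm{B}^\alpha_n(u),y)\le \mathrm{H}(\mathrm{B}^\alpha_n(v),y)$ for all $0\le y\le h^\alpha_n$. *)

From HB Require Import structures.
From mathcomp Require Import all_boot all_order all_algebra all_fingroup.
From mathcomp Require Import all_classical all_reals all_analysis.
From Stdlib Require Import Relations.
Set Implicit Arguments. Unset Strict Implicit. Unset Printing Implicit Defensive.
Import Order.TTheory GRing.Theory Num.Theory.

(* Convention: points of {1..n} are the 0-based ordinals 'I_n (label k+1 <-> k).
   MathComp perm composition (s * t)%g x = t (s x) is "first s, then t",
   i.e. exactly the paper's right-action convention; (i)w is w i. *)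

Section Coxeter.
Variable n : nat.

Definition adjacent (p : 'I_n * 'I_n) : bool := val p.2 == (val p.1).+1.

Definition word_prod (s : seq ('I_n * 'I_n)) : 'S_n :=
  (\prod_(p <- s) tperm p.1 p.2)%g.

Definition coxeter_length_is (w : 'S_n) (k : nat) : Prop :=
  (exists s, [/\ all adjacent s, size s = k & word_prod s = w]) /\
  (forall s, all adjacent s -> word_prod s = w -> (k <= size s)%N).

Definition is_reflection (t : 'S_n) : Prop :=
  exists i j : 'I_n, i != j /\ t = tperm i j.

Definition bruhat_cover (w w' : 'S_n) : Prop :=
  exists t, [/\ is_reflection t, w' = (w * t)%g &
    exists k, coxeter_length_is w k /\ coxeter_length_is w' k.+1].

Definition bruhat_lt : 'S_n -> 'S_n -> Prop := clos_trans _ bruhat_cover.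
End Coxeter.

Section Borders.
Local Open Scope ring_scope.
Variable R : realType.
Variable n : nat.
Variable alpha : R.

(* theta_{k+1} for k : 'I_n *)
Definition theta (k : 'I_n) : R :=
  k%:R * (pi - 2 * alpha) / (n%:R - 1) + alpha.

Definition beta (k : 'I_n) : R * R := (- cos (theta k), sin (theta k)).

Definition border_pt (w : 'S_n) (i : nat) : R * R :=
  (\sum_(j < n | (j < i)%N) (beta ((w^-1)%g j)).1,
   \sum_(j < n | (j < i)%N) (beta ((w^-1)%g j)).2).

Definition on_segment (A B P : R * R) : Prop :=
  exists2 t : R, 0 <= t <= 1 &
    P = (A.1 + t * (B.1 - A.1), A.2 + t * (B.2 - A.2)).

Definition border (w : 'S_n) : set (R * R) :=
  fun P => exists i : 'I_n, on_segment (border_pt w i) (border_pt w i.+1) P.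

Definition border_height : R := \sum_(k < n) sin (theta k).

(* H(B^alpha_n(w), y): the x-coordinate of the (unique) point of the border
   with y-coordinate y *)
Definition H (w : 'S_n) (y : R) : R := xget 0 [set x | border w (x, y)].

Definition precedes (u v : 'S_n) : Prop :=
  forall y : R, 0 <= y <= border_height -> H u y <= H v y.
End Borders.

From Pilot Require Import Defs.
From HB Require Import structures.
From mathcomp Require Import all_boot all_order all_algebra all_fingroup.
From mathcomp Require Import all_classical all_reals all_analysis.
From mathcomp Require Import lra zify ring.

(* For pi/4 <= alpha <= pi/2 all angles theta_k lie in [pi/4, 3pi/4], so every step
   beta_k lies in the cone |x| <= y, and beta_l - beta_k lies in the cone |y| <= x
   whenever k <= l.  The first fact makes each border the graph of a 1-Lipschitz
   function of the height.  A Bruhat cover u < u (a b) with a < b satisfies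
   u^-1 a < u^-1 b, because the Coxeter length of w is the number of inversions
   of w^-1 and swapping an ascent of a permutation strictly increases that number.
   Walking both borders with the same parameters, the point of the border of
   u (a b) is the point of the border of u displaced by a nonnegative multiple of
   beta_(u^-1 b) - beta_(u^-1 a), hence into the cone |y| <= x; a 1-Lipschitz graph
   meeting that cone lies to the right of the starting point. *)

Set Implicit Arguments.
Unset Strict Implicit.
Unset Printing Implicit Defensive.

Section Inversions.
Variable n : nat.
Implicit Types (s : 'S_n) (k x y : 'I_n).

Definition ninv s : nat :=
  \sum_(p : 'I_n * 'I_n) ((p.1 < p.2)%N && (s p.2 < s p.1)%N).

Lemma ninv1 : ninv 1 = 0%N.
Proof. by apply: big1 => p _; rewrite !perm1; case: ltngtP. Qed.

Lemma ltn_tperm_adj k k' (p : 'I_n * 'I_n) : k' = k.+1 :> nat ->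
  p != (k, k') -> p != (k', k) ->
  (tperm k k' p.1 < tperm k k' p.2)%N = (p.1 < p.2)%N.
Proof.
case: p => a b ek; rewrite !xpair_eqE /=.
case: tpermP => [->|->|? ?]; case: tpermP => [->|->|? ?];
  repeat match goal with H : _ <> _ |- _ => move/eqP: H end;
  rewrite -?(inj_eq val_inj) /= ek; lia.
Qed.

Lemma ninv_tperm_adj s k k' : k' = k.+1 :> nat ->
  (ninv (tperm k k' * s) + (s k' < s k) = ninv s + (s k < s k'))%N.
Proof.
move=> ek; have kk' : k != k' by rewrite -(inj_eq val_inj) /= ek; lia.
pose swap_pair := fun p : 'I_n * 'I_n => (tperm k k' p.1, tperm k k' p.2).
have swap_pair_inj : injective swap_pair.
  by move=> [? ?] [? ?] [/perm_inj -> /perm_inj ->].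
rewrite /ninv (reindex_inj swap_pair_inj) /=.
have swap_neq : (k', k) != (k, k') by rewrite xpair_eqE negb_and kk' orbT.
rewrite (bigD1 (k, k')) // (bigD1 (k', k)) //= [in RHS](bigD1 (k, k')) //.
rewrite [in RHS](bigD1 (k', k)) //=.
rewrite !permM !tpermK tpermL tpermR ek ltnSn ltnNge leqnSn /=.
under eq_bigr => p /andP [pk pk'] do rewrite !permM !tpermK ltn_tperm_adj //.
lia.
Qed.

Lemma ninv_tperm_adj_le s k k' : k' = k.+1 :> nat ->
  (ninv (tperm k k' * s) <= (ninv s).+1)%N.
Proof. by move=> ek; have := @ninv_tperm_adj s k k' ek; lia. Qed.

Lemma ninv_tperm_lt s x y : (x < y)%N -> (s x < s y)%N ->
  (ninv s < ninv (tperm x y * s))%N.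
Proof.
move=> xy; have [d] : exists d, (y - x = d.+1)%N by exists (y - x).-1; lia.
elim: d x s xy => [|d IH] x s xy yx sxy.
  by have := @ninv_tperm_adj s x y ltac:(lia); lia.
have kn : (x.+1 < n)%N by have := ltn_ord y; lia.
pose k := Ordinal kn.
have kx : k != x by rewrite -(inj_eq val_inj) /=; lia.
have ky : k != y by rewrite -(inj_eq val_inj) /=; lia.
have xy' : x != y by rewrite -(inj_eq val_inj) /=; lia.
have yx' : y != x by rewrite eq_sym.
pose s1 : 'S_n := (tperm x k * s)%g.
pose s2 : 'S_n := (tperm k y * s1)%g.
(* (x y) = (x k) (k y) (x k) with k = x + 1 reduces to two adjacent swaps and the
   induction hypothesis for (k y). *)
have -> : (tperm x y * s = tperm x k * s2)%g.
  by rewrite -(tpermJ_tperm ky xy') conjgE tpermV tpermC !mulgA.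
have e1 : (ninv s1 + (s k < s x) = ninv s + (s x < s k))%N := @ninv_tperm_adj s x k erefl.
have := @ninv_tperm_adj s2 x k erefl.
rewrite !permM (tpermD kx yx') tpermL (tpermD xy' ky) tpermL => e2.
have := IH k s1 ltac:(rewrite /=; lia) ltac:(rewrite /=; lia).
rewrite !permM tpermR (tpermD xy' ky) -/s2 => /(_ sxy) IH1.
lia.
Qed.

Lemma perm_adj_ascents_eq1 s :
  (forall k k', k' = k.+1 :> nat -> (s k < s k')%N) -> s = 1%g.
Proof.
move=> asc; apply/permP => i; rewrite perm1; apply: val_inj => /=.
apply/eqP; rewrite eqn_leq; apply/andP; split.
- move Em: (n - i.+1)%N => m; elim: m i Em => [|m IH] i Em.
    by have := ltn_ord (s i); have := ltn_ord i; lia.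
  have kn : (i.+1 < n)%N by lia.
  have := asc i (Ordinal kn) erefl; have := IH (Ordinal kn) ltac:(rewrite /=; lia).
  rewrite /=; lia.
- move Em: (nat_of_ord i) => m; elim: m i Em => [|m IH] i Em; first lia.
  have kn : (m < n)%N by have := ltn_ord i; lia.
  have := asc (Ordinal kn) i Em; have := IH (Ordinal kn) erefl.
  rewrite /=; lia.
Qed.

Lemma perm_adj_descent s :
  s = 1%g \/ exists k k', k' = k.+1 :> nat /\ (s k' < s k)%N.
Proof.
have [desc|nodesc] := pselect (exists k k', k' = k.+1 :> nat /\ (s k' < s k)%N).
  by right.
left; apply: perm_adj_ascents_eq1 => k k' ek.
case: ltngtP => // [lt|/val_inj/perm_inj ekk]; first by case: nodesc; exists k, k'.
by move: ek; rewrite ekk; lia.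
Qed.

Lemma word_prod_rcons (w : seq ('I_n * 'I_n)) p :
  word_prod (rcons w p) = (word_prod w * tperm p.1 p.2)%g.
Proof. by rewrite /word_prod big_rcons. Qed.

Lemma ninv_word_prod_le (w : seq ('I_n * 'I_n)) :
  all (@Defs.adjacent n) w -> (ninv (word_prod w)^-1 <= size w)%N.
Proof.
elim/last_ind: w => [|w p IH]; first by rewrite /word_prod big_nil invg1 ninv1.
rewrite all_rcons => /andP [/eqP ep /IH le_w].
rewrite word_prod_rcons invMg tpermV size_rcons.
by apply: leq_trans (ninv_tperm_adj_le _ ep) _; rewrite ltnS.
Qed.

Lemma exists_word_ninv s :
  exists w, [/\ all (@Defs.adjacent n) w, size w = ninv s & word_prod w = s^-1%g].
Proof.
move Em: (ninv s) => m; elim/ltn_ind: m s Em => m IH s Em.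
have [s1|[k [k' [ek desc]]]] := perm_adj_descent s.
  by exists [::]; rewrite /word_prod big_nil -Em s1 invg1 ninv1.
have := @ninv_tperm_adj s k k' ek; rewrite desc ltnNge (ltnW desc) /= => Es.
have [|w [aw sw pw]] := IH (ninv (tperm k k' * s)) _ _ erefl; first lia.
exists (rcons w (k, k')); split.
- by rewrite all_rcons aw andbT /Defs.adjacent /= ek.
- by rewrite size_rcons sw; lia.
- by rewrite word_prod_rcons pw invMg tpermV -mulgA tperm2 mulg1.
Qed.

Lemma coxeter_length_ninv s (l : nat) : coxeter_length_is s l -> l = ninv s^-1.
Proof.
move=> [[w [aw <- <-]] minimal]; apply/eqP; rewrite eqn_leq ninv_word_prod_le // andbT.
have [w' [aw' <- pw']] := exists_word_ninv (word_prod w)^-1.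
by apply: minimal; rewrite // pw' invgK.
Qed.

Lemma bruhat_cover_tperm u v : bruhat_cover u v ->
  exists x y, [/\ (x < y)%N, v = (u * tperm x y)%g & (u^-1 x < u^-1 y)%N]%g.
Proof.
move=> [_ [[i [j [ij ->]]] -> [k [len_u len_v]]]].
wlog lt_ij : i j ij len_v / (i < j)%N => [gen|].
  case: (ltngtP i j) => [|ji|/val_inj eij]; first exact: gen.
  - by rewrite tpermC; apply: gen; rewrite ?(tpermC j i) // eq_sym.
  - by rewrite eij eqxx in ij.
exists i, j; split => //.
case: ltngtP => // [ji|/val_inj/perm_inj eij]; last by rewrite eij eqxx in ij.
have := @ninv_tperm_lt (u * tperm i j)^-1 i j lt_ij.
rewrite invMg tpermV !permM tpermL tpermR => /(_ ji).
rewrite mulgA tperm2 mul1g -(coxeter_length_ninv len_u).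
by have := coxeter_length_ninv len_v; rewrite invMg tpermV => <-; lia.
Qed.

End Inversions.

Import Order.TTheory GRing.Theory Num.Theory.
Local Open Scope ring_scope.

Section Trigonometry.
Variable R : realType.
Implicit Types x y : R.

Let c : R := cos (pi / 4).

Let c_gt0 : 0 < c.
Proof. by apply: cos_gt0_pihalf; have := pi_gt0 R; lra. Qed.

Let sin_piquarter : sin (pi / 4 : R) = c.
Proof.
have := tan_piquarter R; rewrite /tan => h.
by rewrite -[LHS](divfK (lt0r_neq0 c_gt0)) h mul1r.
Qed.

Let sin_Dpiquarter x : sin (x + pi / 4) = c * (sin x + cos x).
Proof. by rewrite sinD sin_piquarter -/c; ring. Qed.

Let cos_Dpiquarter x : cos (x + pi / 4) = c * (cos x - sin x).
Proof. by rewrite cosD sin_piquarter -/c; ring. Qed.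

Let sin_cos_ge0 x : 0 <= x <= pi / 2 -> 0 <= sin x /\ 0 <= cos x.
Proof.
move=> /andP [x0 x1]; have := pi_gt0 R => pi0.
by split; [apply: sin_ge0_pi | apply: cos_ge0_pihalf]; lra.
Qed.

Lemma abs_cos_le_sin x : pi / 4 <= x <= 3 * pi / 4 -> `|cos x| <= sin x.
Proof.
move=> /andP [x0 x1]; have -> : x = (x - pi / 4) + pi / 4 by ring.
rewrite sin_Dpiquarter cos_Dpiquarter ler_norml.
have [s0 c0] := @sin_cos_ge0 (x - pi / 4) ltac:(apply/andP; split; lra).
by have c_pos := c_gt0; apply/andP; split; nra.
Qed.

Lemma abs_sinB_le_cosB x y : pi / 4 <= x -> x <= y -> y <= 3 * pi / 4 ->
  `|sin y - sin x| <= cos x - cos y.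
Proof.
move=> x0 xy y1; have pi0 := pi_gt0 R.
have -> : x = (x - pi / 4) + pi / 4 by ring.
have -> : y = (y - pi / 4) + pi / 4 by ring.
rewrite !sin_Dpiquarter !cos_Dpiquarter ler_norml.
set u := x - pi / 4; set v := y - pi / 4.
have uv : u <= v by rewrite lerD2r.
have inI w : 0 <= w <= pi / 2 -> w \in `[- (pi / 2), pi / 2].
  by rewrite in_itv /= => /andP [? ?]; apply/andP; split; lra.
have uI : 0 <= u <= pi / 2 by apply/andP; split; rewrite /u; lra.
have vI : 0 <= v <= pi / 2 by apply/andP; split; rewrite /v; lra.
have [euv|uv'] := eqVneq u v; first by rewrite euv !subrr oppr0 lexx.
have ltuv : u < v by rewrite lt_neqAle uv' uv.
have sin_uv : sin u < sin v by rewrite ltr_sin ?inI.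
have cos_uv : cos v < cos u.
  by rewrite ltr_cos // in_itv /=; [case/andP: vI | case/andP: uI] => *; apply/andP; split; lra.
have c_pos := c_gt0; apply/andP; split; nra.
Qed.

End Trigonometry.

Lemma ler_norm_sum_cone (R : numDomainType) (I : finType) (e f g : I -> R) :
  (forall i, 0 <= e i) -> (forall i, `|f i| <= g i) ->
  `|\sum_i e i * f i| <= \sum_i e i * g i.
Proof.
move=> e_ge0 fg; apply: le_trans (ler_norm_sum _ _ _) _; apply: ler_sum => i _.
by rewrite normrM ger0_norm // ler_wpM2l.
Qed.

Lemma sum_tperm (R : comNzRingType) (I : finType) (c g : I -> R) (x y : I) :
  \sum_i c i * g (tperm x y i) = \sum_i c i * g i + (c x - c y) * (g y - g x).
Proof.
have [<-|xy] := eqVneq x y; first by rewrite tperm1 subrr mul0r addr0; under eq_bigr do rewrite perm1.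
rewrite (bigD1 x) // (bigD1 y) 1?eq_sym //= [in RHS](bigD1 x) // [in RHS](bigD1 y) 1?eq_sym //=.
rewrite tpermL tpermR.
under eq_bigr => i /andP [ix iy] do rewrite tpermD 1?eq_sym //.
ring.
Qed.

Lemma ex_lerp_between (R : realFieldType) (a : nat -> R) (m : nat) (c : R) :
  (0 < m)%N -> (forall i, (i < m)%N -> a i < a i.+1) -> a 0%N <= c <= a m ->
  exists2 i, (i < m)%N & exists2 t, 0 <= t <= 1 & c = a i + t * (a i.+1 - a i).
Proof.
elim: m => [//|m IH] _ incr /andP [c0 cm].
have [amc|cam] := lerP (a m) c.
  have d_gt0 : 0 < a m.+1 - a m by rewrite subr_gt0 incr.
  exists m => //; exists ((c - a m) / (a m.+1 - a m)); last by rewrite divfK ?lt0r_neq0 // addrC subrK.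
  apply/andP; split; first by apply: divr_ge0; [rewrite subr_ge0 | exact: ltW].
  by rewrite ler_pdivrMr // mul1r lerD2r.
have m_gt0 : (0 < m)%N by case: m cam {IH incr cm} => // cam; move: c0; rewrite leNgt cam.
have [|i im it] := IH m_gt0 (fun i im => incr i (ltnW im)); first by rewrite c0 ltW.
by exists i => //; apply: ltnW.
Qed.

Section Borders.
Variables (R : realType) (n : nat) (alpha : R).
Hypothesis n_ge2 : (2 <= n)%N.
Hypothesis alpha_bounds : pi / 4 <= alpha <= pi / 2.
Implicit Types (u v w : 'S_n) (i j k a b : 'I_n).

Let theta_step : R := (pi - 2 * alpha) / (n%:R - 1).

Let n1_gt0 : 0 < n%:R - 1 :> R.
Proof. by rewrite subr_gt0 (_ : 1 = 1%:R) // ltr_nat. Qed.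

Let theta_stepE k : theta alpha k = k%:R * theta_step + alpha.
Proof. by rewrite /theta mulrA. Qed.

Let theta_step_ge0 : 0 <= theta_step.
Proof. by apply: divr_ge0; [case/andP: alpha_bounds; lra | exact: ltW]. Qed.

Lemma theta_mono k k' : (k <= k')%N -> theta alpha k <= theta alpha k'.
Proof. by move=> kk'; rewrite !theta_stepE lerD2r ler_wpM2r // ler_nat. Qed.

Lemma theta_bounds k : pi / 4 <= theta alpha k <= 3 * pi / 4.
Proof.
have k_le : k%:R <= n%:R - 1 :> R.
  by rewrite lerBrDr (_ : 1 = 1%:R) // -natrD ler_nat addn1 ltn_ord.
have full_step : (n%:R - 1) * theta_step = pi - 2 * alpha.
  by rewrite mulrC divfK // lt0r_neq0.
have := ler_wpM2r theta_step_ge0 k_le; rewrite full_step => le_k.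
have := mulr_ge0 (ler0n R k) theta_step_ge0.
by rewrite theta_stepE; case/andP: alpha_bounds => *; apply/andP; split; lra.
Qed.

Lemma beta_cone k : `|(beta alpha k).1| <= (beta alpha k).2.
Proof. by rewrite normrN abs_cos_le_sin // theta_bounds. Qed.

Lemma beta2_gt0 k : 0 < (beta alpha k).2.
Proof.
have := theta_bounds k; have := pi_gt0 R => *.
by apply: sin_gt0_pi; apply/andP; split; lra.
Qed.

Lemma beta_sub_cone k k' : (k <= k')%N ->
  `|(beta alpha k').2 - (beta alpha k).2| <= (beta alpha k').1 - (beta alpha k).1.
Proof.
move=> kk'; rewrite /= opprK [_ + cos _]addrC.
have := theta_bounds k; have := theta_bounds k' => /andP [_ ?] /andP [? _].
by apply: abs_sinB_le_cosB => //; exact: theta_mono.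
Qed.

Definition walk_weight (i : nat) (t : R) j : R :=
  if (j < i)%N then 1 else if j == i :> nat then t else 0.

Definition border_point w (i : nat) (t : R) : R * R :=
  (\sum_j walk_weight i t j * (beta alpha ((w^-1)%g j)).1,
   \sum_j walk_weight i t j * (beta alpha ((w^-1)%g j)).2).

Lemma sum_walk_weight (F : 'I_n -> R) (i : nat) t :
  \sum_(j < n | (j < i)%N) F j +
    t * (\sum_(j < n | (j < i.+1)%N) F j - \sum_(j < n | (j < i)%N) F j) =
  \sum_j walk_weight i t j * F j.
Proof.
rewrite !(big_mkcond (fun j : 'I_n => (j < _)%N)) -sumrB mulr_sumr -big_split /=.
apply: eq_bigr => j _; rewrite /walk_weight ltnS.
by case: ltngtP => _; ring.
Qed.

Lemma borderP w P :
  border alpha w P <-> exists i : 'I_n, exists2 t, 0 <= t <= 1 & P = border_point w i t.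
Proof.
by split=> -[i [t t01 ->]]; exists i; exists t; rewrite // /border_point -!sum_walk_weight.
Qed.

Lemma walk_weight_ge0 i t j : 0 <= t -> 0 <= walk_weight i t j.
Proof. by rewrite /walk_weight; case: ifP => // _; case: ifP. Qed.

Lemma walk_weight_le_ltn i t i' t' j : (i < i')%N -> t <= 1 -> 0 <= t' ->
  walk_weight i t j <= walk_weight i' t' j.
Proof.
move=> lt_ii' t1 t0'; rewrite {1}/walk_weight; case: ifP => [ji|_].
  by rewrite /walk_weight (ltn_trans ji lt_ii').
case: ifP => [/eqP ji|_]; last exact: walk_weight_ge0.
by rewrite /walk_weight ji lt_ii'.
Qed.

Lemma walk_weight_total i t i' t' : 0 <= t <= 1 -> 0 <= t' <= 1 ->
  (forall j, walk_weight i t j <= walk_weight i' t' j) \/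
  (forall j, walk_weight i' t' j <= walk_weight i t j).
Proof.
move=> /andP [t0 t1] /andP [t0' t1'].
case: (ltngtP i i') => [lt|gt|<-].
- by left=> j; apply: walk_weight_le_ltn.
- by right=> j; apply: walk_weight_le_ltn.
have [tt'|t't] := lerP t t'; [left|right] => j; rewrite /walk_weight;
  by case: ifP => // _; case: ifP => // _; apply: ltW.
Qed.

Lemma walk_weight_antitone i t j j' : 0 <= t <= 1 -> (j <= j')%N ->
  walk_weight i t j' <= walk_weight i t j.
Proof.
move=> /andP [t0 t1] jj'; rewrite {1}/walk_weight; case: ifP => [j'i|_].
  by rewrite /walk_weight (leq_ltn_trans jj' j'i).
case: ifP => [/eqP j'i|_]; last exact: walk_weight_ge0.
rewrite /walk_weight; case: ifP => [//|/negbT]; rewrite -leqNgt => ij.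
by rewrite eqn_leq ij -j'i jj'.
Qed.

Lemma border_lipschitz w P Q : border alpha w P -> border alpha w Q ->
  `|P.1 - Q.1| <= `|P.2 - Q.2|.
Proof.
move=> /borderP [i [t t01 ->]] /borderP [i' [t' t01' ->]].
wlog le_w : i t i' t' t01 t01' / forall j, walk_weight i t j <= walk_weight i' t' j.
  move=> gen; have [le_w|ge_w] := walk_weight_total i i' t01 t01'.
    exact: gen.
  by rewrite distrC [X in _ <= X]distrC; apply: gen.
rewrite distrC [X in _ <= X]distrC -!sumrB.
under eq_bigr do rewrite -mulrBl; under [X in _ <= `|X|]eq_bigr do rewrite -mulrBl.
apply: le_trans (ler_norm_sum_cone _ _) (ler_norm _) => [j|j]; last exact: beta_cone.
by rewrite subr_ge0.
Qed.

Lemma sum_ord_ltS (F : 'I_n -> R) i :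
  \sum_(j < n | (j < i.+1)%N) F j = \sum_(j < n | (j < i)%N) F j + F i.
Proof.
rewrite (bigD1 i) //= addrC; congr (_ + _); apply: eq_bigl => j.
by rewrite ltnS -(inj_eq val_inj) /= leq_eqVlt; case: ltngtP.
Qed.

Lemma border_at_height w y : 0 <= y <= border_height n alpha ->
  border alpha w (H alpha w y, y).
Proof.
move=> y_bounds; apply: (xgetPex 0 (P := [set x | border alpha w (x, y)])).
pose height (m : nat) := (border_pt alpha w m).2.
have height0 : height 0%N = 0 by rewrite /height /border_pt /= big_pred0.
have heightn : height n = border_height n alpha.
  rewrite /height /border_pt /= (eq_bigl xpredT) => [|j]; last by rewrite ltn_ord.
  by rewrite /border_height [RHS](reindex_inj (h := (w^-1)%g) perm_inj).
have [|i lt_in||i lt_in [t t01 ->]] := @ex_lerp_between _ height n y.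
- exact: leq_trans n_ge2.
- by rewrite /height /border_pt /= (sum_ord_ltS _ (Ordinal lt_in)) ltrDl; apply: beta2_gt0.
- by rewrite height0 heightn.
by exists ((border_pt alpha w i).1 + t * ((border_pt alpha w i.+1).1 - (border_pt alpha w i).1));
  exists (Ordinal lt_in); exists t.
Qed.

Lemma precedes_of_cone u v :
  (forall Q, border alpha u Q -> exists2 P, border alpha v P & `|P.2 - Q.2| <= P.1 - Q.1) ->
  precedes alpha u v.
Proof.
(* H v is 1-Lipschitz, so H v y >= P.1 - |P.2 - y| >= H u y. *)
move=> cone y y_bounds.
have [P Pv PQ] := cone _ (border_at_height u y_bounds).
have := border_lipschitz (border_at_height v y_bounds) Pv; rewrite /= !(distrC _ P.1) (distrC y).
move: PQ; rewrite /=; set d := `|P.2 - y| => PQ /ler_normlP [_ Hv].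
lra.
Qed.

Lemma border_point_tperm u a b (i : nat) t :
  let lambda := walk_weight i t a - walk_weight i t b in
  let Ba := beta alpha ((u^-1)%g a) in let Bb := beta alpha ((u^-1)%g b) in
  border_point (u * tperm a b)%g i t =
    ((border_point u i t).1 + lambda * (Bb.1 - Ba.1),
     (border_point u i t).2 + lambda * (Bb.2 - Ba.2)).
Proof.
rewrite {1}/border_point; congr (_, _);
  by under eq_bigr do rewrite invMg tpermV permM; exact: sum_tperm.
Qed.

Lemma precedes_tperm u a b : (a < b)%N -> ((u^-1)%g a <= (u^-1)%g b)%N ->
  precedes alpha u (u * tperm a b)%g.
Proof.
move=> ab uab; apply: precedes_of_cone => _ /borderP [i [t t01 ->]].
exists (border_point (u * tperm a b) i t); first by apply/borderP; exists i; exists t.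
have lambda_ge0 : 0 <= walk_weight i t a - walk_weight i t b.
  by rewrite subr_ge0 walk_weight_antitone // ltnW.
set Q := border_point u i t; rewrite border_point_tperm -/Q /=.
rewrite [Q.1 + _]addrC [Q.2 + _]addrC !addrK normrM ger0_norm //.
by apply: ler_wpM2l => //; apply: beta_sub_cone.
Qed.

End Borders.

Theorem theorem1p4 (R : realType) (n : nat) (hn : (2 <= n)%N) (u v : 'S_n) :
  bruhat_lt u v -> precedes (pi / 4 : R) u v.
Proof.
have quarter : pi / 4 <= (pi / 4 : R) <= pi / 2.
  by have pi0 := pi_gt0 R; apply/andP; split; lra.
elim=> [{}u {}v /bruhat_cover_tperm [a [b [ab -> uab]]]|u' w v' _ prec_uw _ prec_wv].
  exact: precedes_tperm hn quarter _ _ _ ab (ltnW uab).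
by move=> y y_bounds; apply: le_trans (prec_uw y y_bounds) (prec_wv y y_bounds).
Qed.
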